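(* For every prime power $q$, the function $n\mapsto\varrho(n,q)$ (for integers $n\ge1$) is increasing, where $$\varrho(n,q):=\frac{f(n,q)}{\binom{n+1}{2}_q}.$$
   Context: $f(n,q)$ is the smallest size of a set of lines of $\mathrm{PG}(n,q)$ (the $n$-dimensional projective space over $\mathbb F_q$) such that every plane contains one of them ($f(1,q)=0$). $\binom{n+1}{2}_q=\frac{(q^{n+1}-1)(q^n-1)}{(q^2-1)(q-1)}$ is the number of lines of $\mathrm{PG}(n,q)$. *)

From HB Require Import structures.
From mathcomp Require Import all_boot all_order all_algebra all_field.
Set Implicit Arguments. Unset Strict Implicit. Unset Printing Implicit Defensive.
Import GRing.Theory Num.Theory.

(* PG(n,F) = projective geometry of the vector space F^(n+1) = 'rV[F]_(n.+1).
   A projective subspace of (vector) dimension k is represented canonically by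
   the square matrix <<A>>%MS (the canonical representative of its row space). *)

Definition pg_subspaces (F : finFieldType) (n k : nat) : {set 'M[F]_n.+1} :=
  [set A : 'M[F]_n.+1 | (<<A>>%MS == A) && (\rank A == k)].

Definition pg_lines (F : finFieldType) (n : nat) := pg_subspaces F n 2.
Definition pg_planes (F : finFieldType) (n : nat) := pg_subspaces F n 3.

Definition plane_covering (F : finFieldType) (n : nat) (L : {set 'M[F]_n.+1}) :=
  (L \subset pg_lines F n) &&
  [forall P in pg_planes F n, [exists l in L, (l <= P)%MS]].

(* f(n,q): smallest size of such a set of lines.  (The set of all lines is
   always such a set, so the default value #|pg_lines F n| never matters.) *)
Definition f_lines (F : finFieldType) (n : nat) : nat :=
  \big[minn/#|pg_lines F n|]_(L : {set 'M[F]_n.+1} | plane_covering L) #|L|.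

Local Open Scope ring_scope.
Definition gauss2 (q n : nat) : rat :=
  ((q%:R ^+ n.+1 - 1) * (q%:R ^+ n - 1)) / ((q%:R ^+ 2 - 1) * (q%:R - 1)).

Definition rho (F : finFieldType) (n : nat) : rat :=
  (f_lines F n)%:R / gauss2 #|F| n.

From mathcomp Require Import all_boot all_order all_algebra all_field.
From mathcomp Require Import mxabelem ring.
Import Order.TTheory GRing.Theory Num.Theory.

Set Implicit Arguments. Unset Strict Implicit.
Local Open Scope ring_scope.

(* Let L be an optimal plane covering of PG(n+1,q). For every hyperplane H, the
   lines of L inside H form a plane covering of H = PG(n,q), so there are at least
   f(n,q) of them. Counting the pairs (H, l) with l in L and l inside H, where H
   is given by one of its q^(n+2) - 1 nonzero normal vectors and each line has
   q^n - 1 nonzero normal vectors, gives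
     f(n,q) (q^(n+2) - 1) <= f(n+1,q) (q^n - 1),
   which rearranges to rho(n,q) <= rho(n+1,q). *)

Lemma double_counting (T1 T2 : finType) (A : {set T1}) (B : {set T2})
    (r : T1 -> T2 -> bool) :
  (\sum_(x in A) #|[set y in B | r x y]| = \sum_(y in B) #|[set x in A | r x y]|)%N.
Proof.
have card_sep (T : finType) (C : {set T}) (p : pred T) :
    #|[set x in C | p x]| = (\sum_(x in C | p x) 1)%N.
  by rewrite sum1dep_card; apply: eq_card => x; rewrite !inE.
rewrite (eq_bigr _ (fun x _ => card_sep _ B (r x))).
rewrite [RHS](eq_bigr _ (fun y _ => card_sep _ A (r^~ y))).
rewrite (exchange_big_dep (fun y => y \in B)) => [|x y _ /andP[] //].
by apply: eq_bigr => y yB; apply: eq_bigl => x; rewrite yB.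
Qed.

Section PlaneCoverings.

Variable F : finFieldType.

Lemma pg_plane_sub_line n (P : 'M[F]_n.+1) :
  P \in pg_planes F n -> exists2 l, l \in pg_lines F n & (l <= P)%MS.
Proof.
rewrite inE => /andP[_ /eqP rP].
exists <<(pid_mx 2 : 'M_(n.+1, \rank P)) *m row_base P>>%MS.
  rewrite inE genmx_id eqxx /= genmxE mxrankMfree ?row_base_free //.
  by rewrite rank_pid_mx ?rP // ltnW // -rP rank_leq_col.
by rewrite genmxE (submx_trans (submxMl _ _)) // eq_row_base.
Qed.

Lemma pg_lines_plane_covering n : plane_covering (pg_lines F n).
Proof.
apply/andP; split=> //; apply/forall_inP=> P /pg_plane_sub_line[l lL lP].
by apply/exists_inP; exists l.
Qed.

Lemma f_lines_min n (L : {set 'M[F]_n.+1}) :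
  plane_covering L -> (f_lines F n <= #|L|)%N.
Proof. exact: (@bigmin_le_cond _ nat). Qed.

Lemma f_lines_attained n :
  exists2 L : {set 'M[F]_n.+1}, plane_covering L & #|L| = f_lines F n.
Proof.
rewrite /f_lines.
have [|L cL ->] := @eq_bigmin _ nat _ #|pg_lines F n| _ (@plane_covering F n)
  (fun L => #|L|) (pg_lines_plane_covering n).
  by move=> L /andP[sL _]; exact: subset_leq_card.
by exists L.
Qed.

(* Pulling the lines inside the row space of B back along B gives a plane
   covering of PG(k). *)
Lemma plane_covering_restrict k n (L : {set 'M[F]_n.+1}) (B : 'M[F]_(k.+1, n.+1)) :
  plane_covering L -> row_free B ->
  (f_lines F k <= #|[set l in L | (l <= B)%MS]|)%N.
Proof.
move=> /andP[sL cL] fB.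
pose pullback (l : 'M[F]_n.+1) : 'M[F]_k.+1 := <<l *m pinvmx B>>%MS.
apply: leq_trans (leq_imset_card pullback _); apply: f_lines_min.
apply/andP; split.
  apply/subsetP=> _ /imsetP[l /[!inE] /andP[lL lB] ->].
  have := subsetP sL l lL; rewrite !inE => /andP[_ rl].
  by rewrite genmx_id eqxx /= genmxE -(mxrankMfree _ fB) mulmxKpV.
apply/forall_inP=> P /[!inE] /andP[_ rP].
have PB_plane : <<P *m B>>%MS \in pg_planes F n.
  by rewrite inE genmx_id eqxx /= genmxE mxrankMfree.
have /exists_inP[l lL lP] := forall_inP cL _ PB_plane.
have lB : (l <= B)%MS by rewrite (submx_trans lP) // genmxE submxMl.
apply/exists_inP; exists (pullback l); first by rewrite imset_f // inE lL lB.
by rewrite genmxE -(submxMfree _ _ fB) mulmxKpV // (submx_trans lP) ?genmxE.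
Qed.

Lemma hyperplane_row_base n (v : 'rV[F]_n.+1) : v != 0 ->
  exists2 B : 'M[F]_(n, n.+1), row_free B & (B :=: kermx v^T)%MS.
Proof.
move=> nz_v.
have rK : \rank (kermx v^T) = n by rewrite mxrank_ker mxrank_tr rank_rV nz_v subn1.
move: (row_base (kermx v^T)) (row_base_free (kermx v^T)) (eq_row_base (kermx v^T)).
by rewrite rK => B fB eB; exists B.
Qed.

Lemma card_nonzero_normals n r (A : 'M[F]_(r, n)) :
  #|[set v : 'rV[F]_n | (v != 0) && (A <= kermx v^T)%MS]| = (#|F| ^ (n - \rank A) - 1)%N.
Proof.
have -> : [set v | (v != 0) && (A <= kermx v^T)%MS] = rowg (kermx A^T) :\ 0.
  apply/setP=> v; rewrite !inE; congr (_ && _).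
  by apply/sub_kermxP/sub_kermxP => /(congr1 trmx); rewrite trmx_mul trmxK trmx0.
have := cardsD1 0 (rowg (kermx A^T)).
by rewrite card_rowg mxrank_ker mxrank_tr mem_rowg sub0mx add1n => ->; rewrite subn1.
Qed.

Lemma f_lines_succ_bound n :
  (f_lines F n * (#|F| ^ n.+2 - 1) <= f_lines F n.+1 * (#|F| ^ n - 1))%N.
Proof.
have [L cL <-] := f_lines_attained n.+1.
pose S := [set~ 0 : 'rV[F]_n.+2].
have cardS : #|S| = (#|F| ^ n.+2 - 1)%N by rewrite cardsC1 card_mx mul1n subn1.
have hyperplane_count v : v \in S ->
    (f_lines F n <= #|[set l in L | (l <= kermx v^T)%MS]|)%N.
  rewrite !inE => /hyperplane_row_base[B fB eB].
  by rewrite (eq_card (B := [set l in L | (l <= B)%MS])) ?plane_covering_restrict //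
     => l; rewrite !inE eB.
have line_count l : l \in L ->
    #|[set v in S | (l <= kermx v^T)%MS]| = (#|F| ^ n - 1)%N.
  case/andP: cL => /subsetP sL _ /sL /[!inE] /andP[_ /eqP rl].
  by rewrite -[n in RHS](subn2 n.+2) -rl -card_nonzero_normals;
     apply: eq_card => v; rewrite !inE.
rewrite -cardS mulnC -sum_nat_const.
apply: leq_trans (leq_sum _ hyperplane_count) _.
by rewrite double_counting -sum_nat_const (eq_bigr _ line_count).
Qed.

End PlaneCoverings.

Lemma ler_gauss_ratio (R : realFieldType) (a b x y z w : R) :
  0 < x -> 0 < y -> 0 < z -> 0 < w -> a * z <= b * y ->
  a / (x * y / w) <= b / (z * x / w).
Proof.
move=> x0 y0 z0 w0 ab; rewrite -subr_ge0.
have -> : b / (z * x / w) - a / (x * y / w) = w * (b * y - a * z) / (x * y * z).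
  by field; rewrite !lt0r_neq0.
by rewrite divr_ge0 ?mulr_ge0 ?subr_ge0 // ltW.
Qed.

Lemma rho_le_succ (F : finFieldType) n : (1 <= n)%N -> rho F n <= rho F n.+1.
Proof.
move=> n_gt0; rewrite /rho /gauss2.
have q_gt1 := card_finNzRing_gt1 F.
have qX_gt1 k : (0 < k)%N -> 0 < #|F|%:R ^+ k - 1 :> rat.
  by move=> k_gt0; rewrite subr_gt0 exprn_egt1 ?ltr1n // -lt0n.
have q_sub1_gt0 : 0 < #|F|%:R - 1 :> rat by rewrite subr_gt0 ltr1n.
apply: ler_gauss_ratio; rewrite ?mulr_gt0 ?qX_gt1 //.
have := f_lines_succ_bound F n.
by rewrite -(ler_nat rat) !natrM !natrB ?natrX // expn_gt0 ltnW.
Qed.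

Theorem lemma4p6 (F : finFieldType) (n m : nat) :
  (1 <= n)%N -> (n <= m)%N -> (rho F n <= rho F m)%R.
Proof.
move=> n_gt0 /subnK <-; elim: (m - n)%N => [|k IHk] //.
exact: le_trans IHk (rho_le_succ F (leq_trans n_gt0 (leq_addl k n))).
Qed.
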